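(* Let $\mu$ be a complex measure on the Borel $\sigma$-algebra of $[0,1)$, and let $|\mu|$ be its total variation measure. Assume that for some real $\sigma\ge 0$ the following Hölder condition at $1$ holds: $$(H_\sigma)\qquad \exists K<\infty\ \ \forall x\in[0,1):\quad |\mu|\bigl([x,1)\bigr)\le K(1-x)^\sigma .$$ For real $m\ge 0$ let $u_m=\int_{[0,1)}x^m\,\mu(dx)$ (with $0^0=1$), and for real $t$ let $E(t)=\int_{[0,1)}e^{tx}\,\mu(dx)$. Then, as the real variable $m\to+\infty$, $$u_m=e^{-m}E(m)+O\!\left(\frac{1}{m^{1+\sigma}}\right).$$ *)

From HB Require Import structures.
From mathcomp Require Import all_boot all_order all_algebra.
From mathcomp Require Import all_classical all_reals all_analysis.
From mathcomp Require Import complex.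
Set Implicit Arguments. Unset Strict Implicit. Unset Printing Implicit Defensive.
Import Order.TTheory GRing.Theory Num.Theory.
Import numFieldNormedType.Exports.
Local Open Scope classical_set_scope.
Local Open Scope ring_scope.

(* A complex measure on the Borel sets of [0,1) is represented by four finite
   (positive) Borel measures mu1..mu4 on R, via
     mu(A) = (mu1 - mu2)(A ∩ [0,1)) + i (mu3 - mu4)(A ∩ [0,1)).
   Every complex measure on [0,1) arises this way (Jordan decomposition of
   its real and imaginary parts) and conversely. *)

Definition I01 {R : realType} : set R := `[0%R, 1%R[.

Section ComplexMeasure.
Context {R : realType}.
Variables mu1 mu2 mu3 mu4 : {finite_measure set R -> \bar R}.

Definition cmeas (A : set R) : R[i] :=
  Complex (fine (mu1 (A `&` I01)) - fine (mu2 (A `&` I01)))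
          (fine (mu3 (A `&` I01)) - fine (mu4 (A `&` I01))).

Definition cm_integral (f : R -> R) : R[i] :=
  Complex (Rintegral mu1 I01 f - Rintegral mu2 I01 f)
          (Rintegral mu3 I01 f - Rintegral mu4 I01 f).

Definition cm_variation (A : set R) : \bar R :=
  ereal_sup [set (\sum_(0 <= n <oo) ((ComplexField.Normc.normc (cmeas (B n)))%:E))%E
            | B in [set B : nat -> set R |
                     (forall n, measurable (B n)) /\
                     trivIset setT B /\
                     \bigcup_n B n = A]].

End ComplexMeasure.

From Pilot Require Import Defs.
From HB Require Import structures.
From mathcomp Require Import all_boot all_order all_algebra.
From mathcomp Require Import all_classical all_reals all_analysis.
From mathcomp Require Import complex measurable_realfun.
From mathcomp Require Import lra ring.
Import Order.TTheory GRing.Theory Num.Theory.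
Import numFieldNormedType.Exports.
Local Open Scope classical_set_scope.
Local Open Scope ring_scope.

(* Put [g_m x = e^(m (x - 1)) - x^m], so that [u_m - e^-m E(m) = - \int g_m dmu].  One has
   [0 <= g_m x <= 4 m (1 - x)^2 e^(-m (1 - x))], which is at most [4 (k + 1)^2 e^-k / m] when
   [k <= m (1 - x) < k + 1]; so [g_m] is dominated by [sum_k 4 (k + 1)^2 e^-k / m] times the
   indicator of [[1 - (k + 1) / m, 1)].  Hence for a positive measure [lam] with
   [lam [x, 1) <= K (1 - x)^sigma], the integral of [g_m] is at most
   [4 K / m^(1 + sigma) * sum_k (k + 1)^(2 + sigma) e^-k], a convergent series.  The real and
   imaginary parts of [mu] are differences of finite measures whose Jordan parts inherit the
   Hoelder bound from [|mu|], which reduces the theorem to the positive case. *)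

Section elementary_bounds.
Context {R : realType}.
Implicit Types m x y a : R.

Lemma powR_le_expR_mulB1 m x : 0 < m -> 0 <= x -> x `^ m <= expR (m * (x - 1)).
Proof.
move=> m0 x0; have [->|xneq0] := eqVneq x 0; first by rewrite powR0 ?gt_eqF ?expR_ge0.
have xgt0 : 0 < x by rewrite lt_neqAle eq_sym xneq0.
rewrite /powR (negbTE xneq0) ler_expR; apply: ler_wpM2l; first exact: ltW.
by have := @le_ln1Dx R (x - 1); rewrite subrKC; apply; lra.
Qed.

Lemma subr1_ln_le x : 0 < x -> x - 1 - ln x <= (1 - x) ^+ 2 / x.
Proof.
move=> x0; have xV0 : 0 < x^-1 by rewrite invr_gt0.
have := @le_ln1Dx R (x^-1 - 1); rewrite subrKC lnV ?posrE // => /(_ ltac:(lra)).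
have -> : (1 - x) ^+ 2 / x = x - 2 + x^-1 by field; rewrite gt_eqF.
lra.
Qed.

Lemma expR_mulB1_sub_powR_le m x : 1 <= m -> 0 <= x < 1 ->
  expR (m * (x - 1)) - x `^ m <= 4 * m * (1 - x) ^+ 2 * expR (m * (x - 1)).
Proof.
move=> m1 /andP[x0 x1]; set E := expR (m * (x - 1)).
have E0 : 0 <= E := expR_ge0 _.
(* Far from 1 the prefactor exceeds 1; near 1, [x ^ m = E e^-t] with [t <= 2 m (1 - x)^2]. *)
have [xlt|xge] := ltP x 2^-1.
  have : 1 <= 4 * m * (1 - x) ^+ 2 by rewrite -mulrA; nra.
  have := powR_ge0 x m; nra.
have xgt0 : 0 < x by lra.
set t := m * (x - 1 - ln x).
have powE : x `^ m = E * expR (- t).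
  by rewrite /powR gt_eqF // -expRD; congr expR; rewrite /t; ring.
have t_le : t <= 2 * m * (1 - x) ^+ 2.
  have xV : x^-1 <= 2.
    have xV0 : 0 < x^-1 by rewrite invr_gt0.
    have : x * x^-1 = 1 by rewrite mulfV ?gt_eqF.
    nra.
  have m0 : 0 <= m by lra.
  apply: (le_trans (ler_wpM2l m0 (subr1_ln_le x xgt0))).
  have : 0 <= m * ((1 - x) ^+ 2 * (2 - x^-1)).
    by apply: mulr_ge0 => //; apply: mulr_ge0; [exact: sqr_ge0|lra].
  lra.
have h1 : E * (1 - expR (- t)) <= E * t.
  by apply: ler_wpM2l => //; have := expR_ge1Dx (- t); lra.
have h2 : E * t <= E * (2 * m * (1 - x) ^+ 2) by exact: ler_wpM2l.
have : 0 <= E * (m * (1 - x) ^+ 2) by rewrite mulr_ge0 // mulr_ge0 ?sqr_ge0 //; lra.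
rewrite powE; lra.
Qed.

Lemma expR_mulB1_sub_powR_itv m x : 0 < m -> 0 <= x <= 1 ->
  0 <= expR (m * (x - 1)) - x `^ m <= 1.
Proof.
move=> m0 /andP[x0 x1]; rewrite subr_ge0 powR_le_expR_mulB1 //=.
have : expR (m * (x - 1)) <= 1 by rewrite expR_le1; apply: mulr_ge0_le0; lra.
by have := powR_ge0 x m; lra.
Qed.

Lemma powR_le_expR_half y a : 0 <= y -> 0 < a -> y `^ a <= (2 * a) `^ a * expR (y / 2).
Proof.
move=> y0 a0; have a2 : 0 < 2 * a by lra.
set z := y / (2 * a); have z0 : 0 <= z by rewrite divr_ge0 // ltW.
have yE : y = 2 * a * z by rewrite /z; field; rewrite gt_eqF.
rewrite {1}yE (powRM _ (ltW a2) z0); apply: ler_wpM2l; first exact: powR_ge0.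
have -> : y / 2 = z * a by rewrite yE; field.
rewrite expRM; apply: (ge0_ler_powR (ltW a0)); rewrite ?nnegrE ?expR_ge0 //.
by have := expR_ge1Dx z; lra.
Qed.

Lemma natS_powR_mul_expRN_le a k : 0 < a ->
  k.+1%:R `^ a * expR (- k%:R) <= (2 * a) `^ a * expR 2^-1 * expR (- 2^-1) ^+ k.
Proof.
move=> a0; have := powR_le_expR_half k.+1%:R a (ler0n R k.+1) a0.
move=> /(ler_wpM2r (expR_ge0 (- k%:R))) /le_trans; apply.
rewrite -expRM_natl -!mulrA -!expRD ler_pM2l ?powR_gt0 // ?ler_expR; last lra.
by rewrite -natr1; lra.
Qed.

Lemma powRV a r : 0 <= a -> a^-1 `^ r = (a `^ r)^-1.
Proof. by move=> a0; rewrite -powR_inv1 // powRAC powR_inv1 ?powR_ge0. Qed.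

Lemma nneseries_geometric_le (c q : R) : 0 <= c -> 0 < q < 1 ->
  (\sum_(0 <= k <oo) (c * q ^+ k)%:E <= (c / (1 - q))%:E)%E.
Proof.
move=> c0 /andP[q0 q1]; apply: lime_le.
  by apply: is_cvg_nneseries => k _ _; rewrite lee_fin mulr_ge0 // exprn_ge0 ?ltW.
apply: nearW => n; rewrite sumEFin lee_fin.
have normq1 : `|q| < 1 by rewrite ger0_norm ?ltW.
have := geometric_le_lim n c0 q0 normq1.
by rewrite /series /= big_mkord.
Qed.

End elementary_bounds.

Section tail_decomposition.
Context {R : realType}.
Implicit Types (m x sigma : R) (k : nat).

Definition tail_itv m k : set R := `[1 - k.+1%:R / m, 1[.

Definition tail_weight m k : R := 4 / m * k.+1%:R ^+ 2 * expR (- k%:R).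

Lemma tail_weight_ge0 m k : 0 < m -> 0 <= tail_weight m k.
Proof.
by move=> m0; rewrite !mulr_ge0 ?expR_ge0 ?sqr_ge0 ?invr_ge0 ?ltW.
Qed.

Lemma expR_mulB1_sub_powR_le_tails m x : 1 <= m -> 0 <= x < 1 ->
  ((expR (m * (x - 1)) - x `^ m)%:E <=
   \sum_(0 <= k <oo) (tail_weight m k * \1_(tail_itv m k) x)%:E)%E.
Proof.
move=> m1 /[dup] x01 /andP[x0 x1]; have m0 : 0 < m by lra.
set u := m * (1 - x); have u0 : 0 <= u by rewrite mulr_ge0; lra.
have /andP[u_ge u_lt] := truncn_itv u0; set k0 := Num.truncn u in u_ge u_lt.
have term_ge0 k : (0 <= (tail_weight m k * \1_(tail_itv m k) x)%:E)%E.
  by rewrite lee_fin mulr_ge0 ?indic_ge0 ?tail_weight_ge0.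
apply: le_trans (nneseries_lim_ge k0.+1 (fun k _ _ => term_ge0 k)).
rewrite big_nat_recr //= -[X in (X <= _)%E]add0e.
apply: leeD; first exact: sume_ge0.
have x_tail : x \in tail_itv m k0.
  rewrite inE /tail_itv /= in_itv /= x1 andbT lerBlDr -lerBlDl.
  by rewrite ler_pdivlMr // mulrC ltW.
rewrite indicE x_tail mulr1 lee_fin.
apply: (le_trans (expR_mulB1_sub_powR_le m x m1 x01)).
have -> : 4 * m * (1 - x) ^+ 2 * expR (m * (x - 1)) = 4 / m * u ^+ 2 * expR (- u).
  have -> : m * (x - 1) = - u by rewrite /u; ring.
  by rewrite /u; field; rewrite gt_eqF.
rewrite /tail_weight; apply: ler_pM.
- by apply: mulr_ge0; [rewrite divr_ge0 // ltW|exact: sqr_ge0].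
- exact: expR_ge0.
- by rewrite ler_pM2l ?divr_gt0 // ler_sqr ?nnegrE // ltW.
- by rewrite ler_expR lerN2.
Qed.

Lemma tail_weight_mul_powR m sigma k : 0 < m ->
  tail_weight m k * (k.+1%:R / m) `^ sigma =
  4 / m `^ (1 + sigma) * (k.+1%:R `^ (2 + sigma) * expR (- k%:R)).
Proof.
move=> m0; have n0 : 0 < k.+1%:R :> R by rewrite ltr0n.
rewrite powRM ?invr_ge0 ?ltW // powRV ?ltW //.
rewrite powRD; last by rewrite (gt_eqF m0) implybT.
rewrite [_ `^ (2 + sigma)]powRD; last by rewrite (gt_eqF n0) implybT.
rewrite powRr1 ?powR_mulrn ?ltW //.
have : 0 < m `^ sigma by rewrite powR_gt0.
by rewrite /tail_weight => ?; field; rewrite !gt_eqF.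
Qed.

End tail_decomposition.

(* [4 K A / (1 - q)], where [A q^k] with [q = e^(-1/2)] is the bound of
   [natS_powR_mul_expRN_le] on [(k + 1)^(2 + sigma) e^-k]. *)
Definition holder_const {R : realType} (sigma K : R) : R :=
  4 * K * ((2 * (2 + sigma)) `^ (2 + sigma) * expR 2^-1) / (1 - expR (- 2^-1)).

Lemma measurable_expR_mulB1_sub_powR {R : realType} (D : set R) (m : R) :
  measurable_fun D (fun x => expR (m * (x - 1)) - x `^ m).
Proof.
apply: measurable_funB; last exact: measurable_funS (measurable_powR m).
by apply: measurableT_comp => //; apply: measurable_funM => //; exact: measurable_funB.
Qed.

Section holder_measure.
Context {R : realType}.
Variables (lam : {measure set R -> \bar R}) (sigma K : R).
Hypothesis sigma_ge0 : 0 <= sigma.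
Hypothesis lam_holder : forall x : R, 0 <= x < 1 ->
  (lam `[x, 1%R[%classic <= (K * (1 - x) `^ sigma)%:E)%E.

Let K_ge0 : 0 <= K.
Proof.
have := lam_holder 0; rewrite lexx ltr01 => /(_ isT).
by rewrite subr0 powR1 mulr1 => /(le_trans (measure_ge0 _ _)); rewrite lee_fin.
Qed.

Lemma measure_tail_itv_le m k : 0 < m ->
  (lam (tail_itv m k `&` I01) <= (K * (k.+1%:R / m) `^ sigma)%:E)%E.
Proof.
move=> m0; have w0 : 0 < k.+1%:R / m by rewrite divr_gt0 ?ltr0n.
set b := Num.max (1 - k.+1%:R / m) 0.
have b01 : 0 <= b < 1 by rewrite le_max lexx orbT gt_max ltr01 andbT; lra.
have ab : 1 - k.+1%:R / m <= b by rewrite le_max lexx.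
have sub : tail_itv m k `&` I01 `<=` `[b, 1%R[%classic.
  by move=> y; rewrite /tail_itv /I01 /= !in_itv /= ge_max => -[/andP[-> ->] /andP[-> _]].
apply: (le_trans (le_measure _ _ _ sub)); rewrite ?inE; try exact: measurable_itv.
  exact: measurableI (measurable_itv _) (measurable_itv _).
apply: (le_trans (lam_holder _ b01)); rewrite lee_fin ler_wpM2l //.
by rewrite ge0_ler_powR ?nnegrE //; lra.
Qed.

Lemma integral_expR_mulB1_sub_powR_le_tails m : 1 <= m ->
  (\int[lam]_(x in I01) (expR (m * (x - 1)) - x `^ m)%:E <=
   \sum_(0 <= k <oo) (tail_weight m k)%:E * lam (tail_itv m k `&` I01))%E.
Proof.
move=> m1; have m0 : 0 < m by lra.
have mI : measurable (I01 : set R) by exact: measurable_itv.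
have term_ge0 k x : (0 <= (tail_weight m k * \1_(tail_itv m k) x)%:E)%E.
  by rewrite lee_fin mulr_ge0 ?indic_ge0 ?tail_weight_ge0.
have mterm k : measurable_fun I01 (fun x : R => (tail_weight m k * \1_(tail_itv m k) x)%:E).
  apply/measurable_EFinP; apply: measurable_funM => //.
  by apply: measurable_indic; exact: measurable_itv.
apply: le_trans.
  apply: (ge0_le_integral lam mI
    (f2 := fun x => (\sum_(0 <= k <oo) (tail_weight m k * \1_(tail_itv m k) x)%:E)%E)).
  - move=> x; rewrite /I01 /= in_itv /= => /andP[x0 _].
    by rewrite lee_fin subr_ge0 powR_le_expR_mulB1.
  - by apply/measurable_EFinP; exact: measurable_expR_mulB1_sub_powR.
  - by apply: (@ge0_emeasurable_sum _ _ _ _ _ predT) => [k x _ _|k _]; last exact: mterm.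
  - by move=> x; rewrite /I01 /= in_itv /=; exact: expR_mulB1_sub_powR_le_tails.
rewrite integral_nneseries //; apply: lee_nneseries => [k _ _|k _].
  by apply: integral_ge0 => x _; exact: term_ge0.
rewrite (@integralZl_indic _ _ _ lam _ mI (fun=> tail_itv m k)) /=; last exact: measurable_itv.
  by rewrite integral_indic //; exact: measurable_itv.
by rewrite ltNge tail_weight_ge0.
Qed.

Lemma holder_integral_expR_mulB1_sub_powR_le m : 1 <= m ->
  (\int[lam]_(x in I01) (expR (m * (x - 1)) - x `^ m)%:E <=
   (holder_const sigma K / m `^ (1 + sigma))%:E)%E.
Proof.
move=> m1; have m0 : 0 < m by lra.
apply: le_trans (integral_expR_mulB1_sub_powR_le_tails m m1) _.
set A := (2 * (2 + sigma)) `^ (2 + sigma) * expR 2^-1.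
set q := expR (- 2^-1) : R.
set c := 4 * K * A / m `^ (1 + sigma).
have q01 : 0 < q < 1 by rewrite expR_gt0 expR_lt1 /=; lra.
have c0 : 0 <= c by rewrite !mulr_ge0 ?invr_ge0 ?powR_ge0 ?expR_ge0.
rewrite (_ : holder_const sigma K / _ = c / (1 - q)); last by rewrite /holder_const mulrAC.
apply: le_trans _ (nneseries_geometric_le c q c0 q01).
apply: lee_nneseries => [k _ _|k _]; first by rewrite mule_ge0 ?lee_fin ?tail_weight_ge0.
apply: le_trans.
  apply: lee_wpmul2l; first by rewrite lee_fin tail_weight_ge0.
  exact: measure_tail_itv_le.
rewrite -EFinM lee_fin mulrCA tail_weight_mul_powR //.
rewrite (_ : c * q ^+ k = K * (4 / m `^ (1 + sigma) * (A * q ^+ k))); last by rewrite /c; ring.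
apply: ler_wpM2l => //; apply: ler_wpM2l; first by rewrite divr_ge0 ?powR_ge0.
have s2 : 0 < 2 + sigma by have := sigma_ge0; lra.
exact: natS_powR_mul_expRN_le.
Qed.

End holder_measure.

Lemma finite_measure_integrable_bounded {d} {T : measurableType d} {R : realType}
    (mu : {finite_measure set T -> \bar R}) (D : set T) (f : T -> R) (M : R) :
  measurable D -> measurable_fun D f -> (forall x, D x -> `|f x| <= M) ->
  mu.-integrable D (EFin \o f).
Proof.
move=> mD mf fM; apply: measurable_bounded_integrable => //.
  by have := fin_num_measure mu D mD; rewrite fin_numElt => /andP[_ ->].
exists M; split; first exact: num_real.
by move=> M' MM' x Dx; apply: le_trans (fM x Dx) _; exact: ltW.
Qed.

Section finite_measure_difference.
Context {R : realType} {ma mb : {finite_measure set R -> \bar R}} {P N : set R}.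
Hypothesis PN : hahn_decomposition
  (cadd (charge_of_finite_measure ma) (cscale (-1) (charge_of_finite_measure mb))) P N.

Local Notation JP := (jordan_pos PN).
Local Notation JN := (jordan_neg PN).

Let finE (mu : {finite_measure set R -> \bar R}) A :
  measurable A -> mu A = (fine (mu A))%:E.
Proof. by move=> mA; rewrite fineK ?fin_num_measure. Qed.

Let nuE A : cadd (charge_of_finite_measure ma) (cscale (-1) (charge_of_finite_measure mb)) A =
  (ma A - mb A)%E.
Proof. by rewrite /cadd /= /cscale /= mulN1e. Qed.

Lemma measure_add_jordan A : measurable A -> (ma A + JN A = mb A + JP A)%E.
Proof.
move=> mA; have := jordan_decomp PN mA; rewrite /= nuE /cadd /= /cscale /= mulN1e.
rewrite (finE ma _ mA) (finE mb _ mA) (finE JP _ mA) (finE JN _ mA) -!EFinN -!EFinD => -[h].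
by congr EFin; lra.
Qed.

Lemma Rintegral_sub_jordan (D : set R) (g : R -> R) (M : R) :
  measurable D -> measurable_fun D g -> (forall x, D x -> 0 <= g x <= M) ->
  Rintegral ma D g - Rintegral mb D g = Rintegral JP D g - Rintegral JN D g.
Proof.
move=> mD mg g0M.
have iE (mu : {finite_measure set R -> \bar R}) :
    (\int[mu]_(x in D) (g x)%:E = (Rintegral mu D g)%:E)%E.
  rewrite fineK // integrable_fin_num //.
  apply: (finite_measure_integrable_bounded mu D g M mD mg) => x /g0M /andP[g0 gM].
  by rewrite ger0_norm.
have : (\int[ma]_(x in D) (g x)%:E + \int[JN]_(x in D) (g x)%:E =
        \int[mb]_(x in D) (g x)%:E + \int[JP]_(x in D) (g x)%:E)%E.
  have g0 x : D x -> (0 <= (g x)%:E)%E by move=> /g0M /andP[g0 _]; rewrite lee_fin.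
  have mEg : measurable_fun D (EFin \o g) by exact/measurable_EFinP.
  rewrite -!ge0_integral_measure_add //.
  apply: eq_measure_integral => A mA _.
  transitivity (ma A + JN A)%E; first exact: measure_addE.
  by rewrite measure_add_jordan //; symmetry; exact: measure_addE.
by rewrite !iE -!EFinD => -[]; lra.
Qed.

Context {sigma K : R}.
Hypothesis holder : forall x : R, 0 <= x < 1 -> forall B, measurable B ->
  B `<=` `[x, 1%R[%classic -> `|fine (ma B) - fine (mb B)| <= K * (1 - x) `^ sigma.

Let restrict_holder (Q : set R) x : measurable Q -> 0 <= x < 1 ->
  `|fine (ma (`[x, 1%R[%classic `&` Q)) - fine (mb (`[x, 1%R[%classic `&` Q))| <=
  K * (1 - x) `^ sigma.
Proof.
move=> mQ x01; apply: (holder _ x01); last exact: subIsetl.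
by apply: measurableI => //; exact: measurable_itv.
Qed.

Lemma jordan_pos_holder x : 0 <= x < 1 ->
  (JP `[x, 1%R[%classic <= (K * (1 - x) `^ sigma)%:E)%E.
Proof.
move=> x01; rewrite jordan_posE cjordan_posE /crestr0 mem_set; last exact: measurable_itv.
have [[mP _] _ _ _] := PN.
have mIP : measurable (`[x, 1%R[%classic `&` P) by apply: measurableI => //; exact: measurable_itv.
rewrite /crestr /= nuE (finE ma _ mIP) (finE mb _ mIP) -EFinB lee_fin.
exact: le_trans (ler_norm _) (restrict_holder _ _ mP x01).
Qed.

Lemma jordan_neg_holder x : 0 <= x < 1 ->
  (JN `[x, 1%R[%classic <= (K * (1 - x) `^ sigma)%:E)%E.
Proof.
move=> x01; rewrite jordan_negE cjordan_negE /crestr0 mem_set; last exact: measurable_itv.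
have [_ [mN _] _ _] := PN.
have mIN : measurable (`[x, 1%R[%classic `&` N) by apply: measurableI => //; exact: measurable_itv.
rewrite /crestr /= nuE (finE ma _ mIN) (finE mb _ mIN) -EFinB -EFinN lee_fin.
by apply: le_trans (ler_norm _) _; rewrite normrN; exact: restrict_holder.
Qed.

End finite_measure_difference.

Lemma Rintegral_sub_expR_mulB1_sub_powR_le {R : realType}
    (ma mb : {finite_measure set R -> \bar R}) (sigma K m : R) :
  0 <= sigma -> 1 <= m ->
  (forall x : R, 0 <= x < 1 -> forall B, measurable B -> B `<=` `[x, 1%R[%classic ->
     `|fine (ma B) - fine (mb B)| <= K * (1 - x) `^ sigma) ->
  `|Rintegral ma I01 (fun x => expR (m * (x - 1)) - x `^ m) -
    Rintegral mb I01 (fun x => expR (m * (x - 1)) - x `^ m)| <=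
  holder_const sigma K / m `^ (1 + sigma).
Proof.
move=> sigma0 m1 holder; have m0 : 0 < m by lra.
set g := fun x : R => expR (m * (x - 1)) - x `^ m.
have mI : measurable (I01 : set R) by exact: measurable_itv.
have g01 x : I01 x -> 0 <= g x <= 1.
  by rewrite /I01 /= in_itv /= => /andP[x0 /ltW x1]; apply: expR_mulB1_sub_powR_itv; rewrite ?x0.
have bound (lam : {finite_measure set R -> \bar R}) :
    (forall x, 0 <= x < 1 -> (lam `[x, 1%R[%classic <= (K * (1 - x) `^ sigma)%:E)%E) ->
    0 <= Rintegral lam I01 g <= holder_const sigma K / m `^ (1 + sigma).
  move=> lam_holder; rewrite Rintegral_ge0 /=; last by move=> x /g01 /andP[].
  rewrite -lee_fin fineK; first exact: holder_integral_expR_mulB1_sub_powR_le.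
  apply: integrable_fin_num => //.
  apply: (finite_measure_integrable_bounded lam I01 g 1 mI) => [|x /g01 /andP[g0 g1]].
    exact: measurable_expR_mulB1_sub_powR.
  by rewrite ger0_norm.
have [P [N PN]] := Hahn_decomposition
  (cadd (charge_of_finite_measure ma) (cscale (-1) (charge_of_finite_measure mb))).
rewrite (Rintegral_sub_jordan PN I01 g 1 mI (measurable_expR_mulB1_sub_powR _ m) g01).
have /andP[p0 pC] := bound _ (jordan_pos_holder PN holder).
have /andP[n0 nC] := bound _ (jordan_neg_holder PN holder).
by rewrite ler_norml; apply/andP; split; lra.
Qed.

Section normc_Complex.
Context {R : rcfType}.
Implicit Types a b : R.
Local Notation normc := ComplexField.Normc.normc.

Lemma normr_le_normc_Re a b : `|a| <= normc (Complex a b).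
Proof. by rewrite /= -sqrtr_sqr; apply: ler_wsqrtr; rewrite lerDl sqr_ge0. Qed.

Lemma normr_le_normc_Im a b : `|b| <= normc (Complex a b).
Proof. by rewrite /= -sqrtr_sqr; apply: ler_wsqrtr; rewrite lerDr sqr_ge0. Qed.

Lemma normc_le_normrD a b : normc (Complex a b) <= `|a| + `|b|.
Proof.
apply: (@le_trans _ _ (Num.sqrt ((`|a| + `|b|) ^+ 2))).
  apply: ler_wsqrtr.
  rewrite -[a ^+ 2]real_normK ?num_real // -[b ^+ 2]real_normK ?num_real //.
  by have := normr_ge0 a; have := normr_ge0 b; nra.
by rewrite sqrtr_sqr ger0_norm ?addr_ge0.
Qed.

End normc_Complex.

Section complex_measure.
Context {R : realType}.
Variables mu1 mu2 mu3 mu4 : {finite_measure set R -> \bar R}.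
Local Notation normc := ComplexField.Normc.normc.
Local Notation cmeas := (cmeas mu1 mu2 mu3 mu4).
Local Notation cm_variation := (cm_variation mu1 mu2 mu3 mu4).

Lemma normc_cmeas_le_variation (A B : set R) : measurable A -> measurable B -> B `<=` A ->
  ((normc (cmeas B))%:E <= cm_variation A)%E.
Proof.
move=> mA mB BA; set B2 := bigcup2 B (A `\` B).
have B2_partition : (forall n, measurable (B2 n)) /\ trivIset setT B2 /\ \bigcup_n B2 n = A.
  split; [|split].
  - by move=> [|[|n]] /=; [exact: mB|exact: measurableD|exact: measurable0].
  - rewrite -trivIset_bigcup2; apply/seteqP; split => // y [By []] //.
  - rewrite bigcup2E; apply/seteqP; split => [y [/BA|[]]|y Ay] //.
    by have [By|nBy] := pselect (B y); [left|right].
apply: le_trans _ (ereal_sup_ubound (ex_intro2 _ _ B2 B2_partition erefl)).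
apply: le_trans _ (nneseries_lim_ge 1 _); first by rewrite big_nat1.
by move=> n _ _; rewrite lee_fin /=; exact: sqrtr_ge0.
Qed.

Lemma cmeas_sub_itv (x : R) (B : set R) : 0 <= x -> B `<=` `[x, 1%R[%classic ->
  cmeas B = Complex (fine (mu1 B) - fine (mu2 B)) (fine (mu3 B) - fine (mu4 B)).
Proof.
move=> x0 BA; rewrite /cmeas /Defs.cmeas (setIidl (_ : B `<=` I01)) // => y /BA.
by rewrite /I01 /= !in_itv /= => /andP[xy ->]; rewrite (le_trans x0 xy).
Qed.

Variables (sigma K : R).
Hypothesis variation_holder : forall x : R, 0 <= x < 1 ->
  (cm_variation `[x, 1%R[%classic <= (K * (1 - x) `^ sigma)%:E)%E.

Let normc_cmeas_holder (x : R) (B : set R) : 0 <= x < 1 -> measurable B ->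
  B `<=` `[x, 1%R[%classic -> normc (cmeas B) <= K * (1 - x) `^ sigma.
Proof.
move=> x01 mB BA; rewrite -lee_fin; apply: le_trans (variation_holder x x01).
exact: normc_cmeas_le_variation (measurable_itv _) mB BA.
Qed.

Lemma variation_holder_Re (x : R) : 0 <= x < 1 -> forall B, measurable B ->
  B `<=` `[x, 1%R[%classic -> `|fine (mu1 B) - fine (mu2 B)| <= K * (1 - x) `^ sigma.
Proof.
move=> /[dup] /andP[x0 _] x01 B mB BA; apply: le_trans (normc_cmeas_holder x B x01 mB BA).
by rewrite (cmeas_sub_itv x B x0 BA) normr_le_normc_Re.
Qed.

Lemma variation_holder_Im (x : R) : 0 <= x < 1 -> forall B, measurable B ->
  B `<=` `[x, 1%R[%classic -> `|fine (mu3 B) - fine (mu4 B)| <= K * (1 - x) `^ sigma.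
Proof.
move=> /[dup] /andP[x0 _] x01 B mB BA; apply: le_trans (normc_cmeas_holder x B x01 mB BA).
by rewrite (cmeas_sub_itv x B x0 BA) normr_le_normc_Im.
Qed.

End complex_measure.

Lemma Rintegral_powR_expR {R : realType} (mu : {finite_measure set R -> \bar R}) (m : R) :
  0 < m ->
  Rintegral mu I01 (fun x => x `^ m) =
  expR (- m) * Rintegral mu I01 (fun x => expR (m * x)) -
  Rintegral mu I01 (fun x => expR (m * (x - 1)) - x `^ m).
Proof.
move=> m0; have mI : measurable (I01 : set R) by exact: measurable_itv.
have x01 (x : R) : I01 x -> 0 <= x <= 1 by rewrite /I01 /= in_itv /= => /andP[-> /ltW ->].
have iexp : mu.-integrable I01 (EFin \o (fun x => expR (m * x))).
  apply: (finite_measure_integrable_bounded mu I01 _ (expR m) mI).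
    by apply: measurableT_comp => //; exact: measurable_funM.
  move=> x /x01 /andP[x0 x1].
  by rewrite ger0_norm ?expR_ge0 // ler_expR; apply: ler_piMr => //; exact: ltW.
have ig : mu.-integrable I01 (EFin \o (fun x => expR (m * (x - 1)) - x `^ m)).
  apply: (finite_measure_integrable_bounded mu I01 _ 1 mI).
    exact: measurable_expR_mulB1_sub_powR.
  by move=> x /x01 /(expR_mulB1_sub_powR_itv _ _ m0) /andP[g0 g1]; rewrite ger0_norm.
rewrite -RintegralZl // -RintegralB //; last first.
  exact: eq_integrable mI _ _ _ (integrableZl mI (expR (- m)) iexp).
apply: eq_Rintegral => x _; rewrite -expRD.
have -> : - m + m * x = m * (x - 1) by ring.
ring.
Qed.

Lemma cm_integral_powR_sub_expR {R : realType}
    (mu1 mu2 mu3 mu4 : {finite_measure set R -> \bar R}) (m : R) : 0 < m ->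
  let g x := expR (m * (x - 1)) - x `^ m in
  cm_integral mu1 mu2 mu3 mu4 (fun x => x `^ m)
    - (expR (- m))%:C%C * cm_integral mu1 mu2 mu3 mu4 (fun x => expR (m * x)) =
  - Complex (Rintegral mu1 I01 g - Rintegral mu2 I01 g)
            (Rintegral mu3 I01 g - Rintegral mu4 I01 g).
Proof.
move=> m0 g; rewrite /cm_integral !Rintegral_powR_expR //.
by congr Complex; rewrite /=; ring.
Qed.

Theorem proposition1 (R : realType)
  (mu1 mu2 mu3 mu4 : {finite_measure set R -> \bar R}) (sigma : R)
  (hsigma : 0 <= sigma)
  (Hholder : exists K : R, forall x : R, 0 <= x < 1 ->
      (cm_variation mu1 mu2 mu3 mu4 `[x, 1%R[ <= (K * (1 - x) `^ sigma)%:E)%E) :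
  exists C M : R, forall m : R, M <= m ->
    ComplexField.Normc.normc
      (cm_integral mu1 mu2 mu3 mu4 (fun x => x `^ m)
       - (expR (- m))%:C%C * cm_integral mu1 mu2 mu3 mu4 (fun x => expR (m * x)))
    <= C / m `^ (1 + sigma).
Proof.
case: Hholder => K HK; exists (2 * holder_const sigma K), 1 => m m1.
rewrite cm_integral_powR_sub_expR ?normcN; last lra.
apply: le_trans (normc_le_normrD _ _) _.
set C := holder_const sigma K / m `^ (1 + sigma).
rewrite (_ : 2 * _ / _ = C + C); last by rewrite /C; ring.
apply: lerD; apply: Rintegral_sub_expR_mulB1_sub_powR_le => //.
- exact: variation_holder_Re HK.
- exact: variation_holder_Im HK.
Qed.
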